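(* Let $R$ be a non-associative ring with pairwise commuting additive bijections $\sigma_1,\ldots,\sigma_n$ respecting $1$. If $R$ is left (right) Noetherian, then so is $R[X_1^\pm,\ldots,X_n^\pm;\sigma_1,\ldots,\sigma_n]$.
   Context: All rings are unital; a non-associative ring is a ring that is not necessarily associative. Left (right) Noetherian means satisfying the ascending chain condition on left (right) ideals. For a non-associative ring $R$ and an additive bijection $\sigma$ of $R$ with $\sigma(1)=1$, the non-associative skew Laurent polynomial ring $R[X^\pm;\sigma]$ is the additive group of finite formal sums $\sum_{i\in\mathbb{Z}} r_iX^i$ ($r_i\in R$) with multiplication given by the biadditive extension of $(rX^m)(sX^n)=(r\sigma^m(s))X^{m+n}$ for $r,s\in R$, $m,n\in\mathbb{Z}$. Given pairwise commuting additive bijections $\sigma_1,\ldots,\sigma_n$ of $R$ respecting $1$, the iterated ring $R[X_1^\pm,\ldots,X_n^\pm;\sigma_1,\ldots,\sigma_n]$ is constructed as follows: set $S_1 := R[X_1^\pm;\sigma_1]$; once $S_i$ is constructed for $i<n$, set $S_{i+1}:=S_i[X_{i+1}^\pm;\widehat{\sigma}_{i+1}]$, where $\widehat{\sigma}_{i+1}$ is the additive bijection on $S_i$ (respecting $1$) defined by $\widehat{\sigma}_{i+1}(rX_1^{m_1}\cdots X_i^{m_i})=\sigma_{i+1}(r)X_1^{m_1}\cdots X_i^{m_i}$. The resulting ring $S_n = R[X_1^\pm;\sigma_1]\cdots[X_n^\pm;\widehat{\sigma}_n]$ is denoted $R[X_1^\pm,\ldots,X_n^\pm;\sigma_1,\ldots,\sigma_n]$.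 *)

From HB Require Import structures.
From mathcomp Require Import all_boot all_order all_algebra.
From mathcomp Require Import finmap.
From mathcomp.multinomials Require Import monalg.
From Stdlib Require Import ClassicalEpsilon.

Set Implicit Arguments.
Unset Strict Implicit.
Unset Printing Implicit Defensive.

Import GRing.Theory.
Local Open Scope ring_scope.

Record naring := NARing {
  nacar :> zmodType;
  namul : nacar -> nacar -> nacar;
  naone : nacar }.

Definition is_naring (R : naring) : Prop :=
  [/\ (forall x y z : R, namul x (y + z) = namul x y + namul x z),
      (forall x y z : R, namul (x + y) z = namul x z + namul y z),
      (forall x : R, namul (naone R) x = x) &
      (forall x : R, namul x (naone R) = x)].

Definition additive_subgroup (R : naring) (I : R -> Prop) : Prop :=
  [/\ I 0, (forall x y, I x -> I y -> I (x + y)) & (forall x, I x -> I (- x))].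

Definition left_ideal (R : naring) (I : R -> Prop) : Prop :=
  additive_subgroup I /\ (forall r x, I x -> I (namul r x)).

Definition right_ideal (R : naring) (I : R -> Prop) : Prop :=
  additive_subgroup I /\ (forall r x, I x -> I (namul x r)).

Definition left_noetherian (R : naring) : Prop :=
  forall I : nat -> R -> Prop,
    (forall k, left_ideal (I k)) ->
    (forall k x, I k x -> I k.+1 x) ->
    exists N, forall k, (N <= k)%N -> forall x, I k x -> I N x.

Definition right_noetherian (R : naring) : Prop :=
  forall I : nat -> R -> Prop,
    (forall k, right_ideal (I k)) ->
    (forall k x, I k x -> I k.+1 x) ->
    exists N, forall k, (N <= k)%N -> forall x, I k x -> I N x.

(* Inverse of a map (it is the inverse whenever the map is bijective). *)
Definition finv (T : Type) (f : T -> T) (y : T) : T :=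
  epsilon (inhabits y) (fun x => f x = y).

Definition zpow (T : Type) (f : T -> T) (m : int) : T -> T :=
  match m with
  | Posz k => iter k f
  | Negz k => iter k.+1 (finv f)
  end.

(* Non-associative skew Laurent polynomial ring R[X^{+-}; sigma]:
   finitely supported functions int -> R, i.e. finite sums  sum_i r_i X^i,
   with (r X^m)(s X^n) = (r sigma^m(s)) X^(m+n) extended biadditively. *)
Definition laurent_car (R : naring) : zmodType := {malg R[int]}.

Definition laurent_mul (R : naring) (sigma : R -> R)
    (f g : laurent_car R) : laurent_car R :=
  \sum_(i <- msupp f) \sum_(j <- msupp g)
     mkmalgU (i + j)%R (namul (f@_i) (zpow sigma i (g@_j))).

Definition laurent (R : naring) (sigma : R -> R) : naring :=
  @NARing (laurent_car R) (laurent_mul sigma) (mkmalgU (0%R : int) (naone R)).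

Definition coefmap (R : naring) (h : R -> R) (f : laurent_car R) : laurent_car R :=
  \sum_(i <- msupp f) mkmalgU i (h (f@_i)).

(* Iterated construction. [S] is the ring built so far, [lift] sends an
   additive map sigma of the base ring R to its extension sigma-hat on S
   (acting on the base coefficients r of r X_1^m_1 ... X_i^m_i). *)
Fixpoint tower (R : naring) (S : naring) (lift : (R -> R) -> S -> S)
    (s : seq (R -> R)) : naring :=
  match s with
  | [::] => S
  | sigma :: s' =>
      @tower R (laurent (lift sigma))
        (fun h => coefmap (lift h)) s'
  end.

Definition iterated_laurent (R : naring) (n : nat) (sigma : 'I_n -> R -> R)
    : naring :=
  @tower R R (fun h => h) [seq sigma i | i <- enum 'I_n].

From Pilot Require Import Defs.
From HB Require Import structures.
From mathcomp Require Import all_boot all_order all_algebra.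
From mathcomp Require Import finmap zify.
From mathcomp.multinomials Require Import monalg.
From Stdlib Require Import ClassicalEpsilon.
From Stdlib Require List.

(* Hilbert's basis argument.  For a left (right) ideal I of S[X^±; τ] and
   d : nat, the coefficients at X^0 of the elements of I supported in degrees
   [-d, 0] form a left (right) ideal L_d(I) of S.
   Multiplying by X^k on the left (right) is invertible and preserves ideals,
   so nested ideals I ⊆ J with L_d(J) ⊆ L_d(I) for every d coincide.  Given an
   ascending chain (I_k), ACC on S makes the diagonal L_k(I_k) and the finitely
   many rows L_d(I_k), d below the diagonal's stabilisation index, stationary,
   which forces the chain to stabilise.  Only three facts about S and τ are
   used: 1 is a two-sided unit, 0 is absorbing, and τ is a bijection fixing 0
   and 1 (so additivity of the σ_i matters only through σ_i(0) = 0, and their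
   commutativity not at all).  These facts pass from S to S[X^±; τ] and to the
   coefficientwise extensions of the σ_i, which lets the argument run up the
   tower. *)

Set Implicit Arguments.
Unset Strict Implicit.
Unset Printing Implicit Defensive.
Import GRing.Theory.
Local Open Scope ring_scope.

Definition unital_absorbing (S : naring) : Prop :=
  [/\ (forall x : S, namul (naone S) x = x), (forall x : S, namul x (naone S) = x),
      (forall x : S, namul x 0 = 0) & (forall x : S, namul 0 x = 0)].

Definition normalized_bijection (S : naring) (h : S -> S) : Prop :=
  [/\ h 0 = 0, bijective h & h (naone S) = naone S].

Lemma unital_absorbing_naring (R : naring) : is_naring R -> unital_absorbing R.
Proof.
move=> [mulrDr mulrDl mul1r mulr1]; split=> // x.
- by apply: (@addrI _ (namul x 0)); rewrite -mulrDr !addr0.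
- by apply: (@addrI _ (namul 0 x)); rewrite -mulrDl !addr0.
Qed.

Lemma normalized_bijection_additive (R : naring) (h : R -> R) :
  (forall x y, h (x + y) = h x + h y) -> bijective h -> h (naone R) = naone R ->
  normalized_bijection h.
Proof.
move=> hD hbij h1; split=> //; apply: (@addrI _ (h 0)).
by rewrite -hD !addr0.
Qed.

Lemma can_iter (T : Type) (f g : T -> T) n :
  cancel f g -> cancel (iter n f) (iter n g).
Proof. by move=> fK; elim: n => [//|n IHn] x; rewrite iterSr iterS fK IHn. Qed.

Section IntegerPowers.
Variables (T : Type) (f : T -> T).
Hypothesis f_bij : bijective f.

Lemma bij_finvK : cancel f (Defs.finv f).
Proof.
move=> x; have [g fK gK] := f_bij; apply: (can_inj fK); rewrite /Defs.finv.
by apply: (epsilon_spec (inhabits (f x)) (fun y => f y = f x)); exists x.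
Qed.

Lemma bij_finvKV : cancel (Defs.finv f) f.
Proof.
move=> y; have [g fK gK] := f_bij; rewrite /Defs.finv.
by apply: (epsilon_spec (inhabits y) (fun x => f x = y)); exists (g y).
Qed.

Lemma zpowK k : cancel (zpow f k) (zpow f (- k)).
Proof.
case: k => [[|n]|n] //=; first exact: can_iter bij_finvK.
exact: can_iter bij_finvKV.
Qed.

Lemma zpow_fixed k c : f c = c -> zpow f k c = c.
Proof.
move=> fc; have finv_c : Defs.finv f c = c by rewrite -{1}fc bij_finvK.
by case: k => n /=; elim: n => //= n ->.
Qed.

End IntegerPowers.

Section AscendingChains.
Variable T : Type.

Definition ascending (I : nat -> T -> Prop) : Prop := forall k x, I k x -> I k.+1 x.

Definition stationary_from (I : nat -> T -> Prop) (N : nat) : Prop :=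
  forall k, (N <= k)%N -> forall x, I k x -> I N x.

Definition acc (is_ideal : (T -> Prop) -> Prop) : Prop :=
  forall I, (forall k, is_ideal (I k)) -> ascending I -> exists N, stationary_from I N.

Lemma ascending_mono I k k' x : ascending I -> (k <= k')%N -> I k x -> I k' x.
Proof.
move=> I_asc /subnK <-; elim: (k' - k)%N => [//|n IHn] /IHn.
by rewrite addSn; exact: I_asc.
Qed.

Lemma stationary_from_le I N N' :
  ascending I -> (N <= N')%N -> stationary_from I N -> stationary_from I N'.
Proof.
move=> I_asc le_NN' I_stat k le_N'k x Ix.
by apply: (ascending_mono I_asc le_NN'); apply: I_stat Ix; apply: leq_trans le_N'k.
Qed.

Lemma acc_stationary_rows is_ideal (F : nat -> nat -> T -> Prop) p :
  acc is_ideal -> (forall d k, is_ideal (F d k)) -> (forall d, ascending (F d)) ->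
  exists M, forall d, (d < p)%N -> stationary_from (F d) M.
Proof.
move=> acc_ideal F_ideal F_asc; elim: p => [|p [M rows_stat]]; first by exists 0%N.
have [N row_stat] := acc_ideal _ (F_ideal p) (F_asc p).
exists (maxn M N) => d; rewrite ltnS leq_eqVlt => /predU1P[->|/rows_stat d_stat].
  by apply: stationary_from_le row_stat; rewrite ?leq_maxr.
by apply: stationary_from_le d_stat; rewrite ?leq_maxl.
Qed.

End AscendingChains.

Section AccTransfer.
Variables (S T : Type) (idS : (S -> Prop) -> Prop) (idT : (T -> Prop) -> Prop).
Variable L : nat -> (T -> Prop) -> S -> Prop.
Hypothesis L_ideal : forall d I, idT I -> idS (L d I).
Hypothesis L_mono : forall d d' I J a,
  (d <= d')%N -> (forall x, I x -> J x) -> L d I a -> L d' J a.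
Hypothesis L_eq : forall I J, idT I -> idT J -> (forall x, I x -> J x) ->
  (forall d a, L d J a -> L d I a) -> forall x, J x -> I x.

Lemma acc_transfer : acc idS -> acc idT.
Proof.
move=> accS I I_ideal I_asc.
have L_chain d d' k k' a : (d <= d')%N -> (k <= k')%N -> L d (I k) a -> L d' (I k') a.
  by move=> le_dd' le_kk'; apply: L_mono => // x; apply: (ascending_mono I_asc).
have [p diag_stat] : exists p, stationary_from (fun k => L k (I k)) p.
  by apply: accS => [k|k a]; [apply: L_ideal | apply: L_chain].
have [M rows_stat] :
    exists M, forall d, (d < p)%N -> stationary_from (fun k => L d (I k)) M.
  apply: acc_stationary_rows accS _ _ => [d k|d k a]; first exact: L_ideal.
  exact: L_chain.
exists (maxn p M) => k le_Nk; apply: L_eq => // [x|d a Lda].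
  by apply: (ascending_mono I_asc); lia.
have [lt_dp|le_pd] := ltnP d p.
  by apply: (L_chain d d M) (rows_stat d lt_dp k _ a Lda); lia.
have Lpa : L p (I p) a.
  by apply: (diag_stat (maxn d k)); [lia | apply: (L_chain d _ k) Lda; lia].
by apply: (L_chain p d p) Lpa; lia.
Qed.

End AccTransfer.

Section SkewLaurent.
Variables (S : naring) (tau : S -> S).
Local Notation T := (laurent_car S).
Local Notation L := (laurent tau).

Lemma mcoeff_sum_msupp (g : T) (F : int -> S) (k m : int) :
  (m - k \notin msupp g -> F (m - k) = 0) ->
  (\sum_(j <- msupp g) << F j *g (j + k) >>)@_m = F (m - k).
Proof.
move=> F_out; rewrite raddf_sum /=.
have eq_shift j : (j + k == m) = (j == m - k) by apply/eqP/eqP; lia.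
under eq_bigr => j _ do rewrite mcoeffU mulrb eq_shift.
rewrite -big_mkcond; have [mk_in|mk_out] := boolP (m - k \in msupp g).
  rewrite big_mkcond (bigD1_seq (m - k)) ?fset_uniq //= eqxx big1 ?addr0 //.
  by move=> j /negbTE ->.
by rewrite F_out // big1_seq // => j /andP[/eqP ->]; rewrite (negbTE mk_out).
Qed.

Lemma coefmapE (h : S -> S) (f : T) m : h 0 = 0 -> (coefmap h f)@_m = h f@_m.
Proof.
move=> h0; rewrite /coefmap.
under eq_bigr => j _ do rewrite -[X in << _ *g X >>]addr0.
by rewrite mcoeff_sum_msupp subr0 // => /mcoeff_outdom ->.
Qed.

Lemma coefmap_normalized_bijection (h : S -> S) :
  normalized_bijection h -> normalized_bijection (S := L) (coefmap h).
Proof.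
case=> h0 [h' hK h'K] h1; have h'0 : h' 0 = 0 by rewrite -{1}h0 hK.
split.
- by apply/malgP => m; rewrite coefmapE // !mcoeff0.
- by exists (coefmap h') => f; apply/malgP => m; rewrite !coefmapE ?hK ?h'K.
- by apply/malgP => m /=; rewrite coefmapE // mcoeffU; case: eqP; rewrite ?h1.
Qed.

Definition supported_in (lo hi : int) (f : T) : Prop :=
  forall m, (m < lo) || (hi < m) -> f@_m = 0.

Lemma supported_in_widen lo hi lo' hi' (f : T) :
  lo' <= lo -> hi <= hi' -> supported_in lo hi f -> supported_in lo' hi' f.
Proof. by move=> le_lo le_hi f_supp m Hm; apply: f_supp; lia. Qed.

Lemma supported_in_empty lo hi (f : T) : hi < lo -> supported_in lo hi f -> f = 0.
Proof. by move=> lt_hi_lo f_supp; apply/malgP => m; rewrite mcoeff0 f_supp //; lia. Qed.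

Lemma laurent_bounded_support (g : T) : exists B : nat, supported_in (- B%:Z) B g.
Proof.
have [B HB] : exists B : nat, forall m, m \in msupp g -> (`|m| <= B)%N.
  by exists (\max_(m <- msupp g) `|m|%N) => m m_in; apply: leq_bigmax_seq.
by exists B => m Hm; apply: mcoeff_outdom; apply/negP => /HB; lia.
Qed.

Lemma supported_in_sub_lead d (f g : T) :
  supported_in (- d%:Z) 0 f -> supported_in (- d%:Z) 0 g -> f@_0 = g@_0 ->
  supported_in (- d%:Z) (-1) (g - f).
Proof.
move=> f_supp g_supp f0 m Hm; rewrite mcoeffB.
have [->|m_neq0] := eqVneq m 0; first by rewrite f0 subrr.
by rewrite f_supp ?g_supp ?subrr //; lia.
Qed.

Definition lead_coefs (d : nat) (I : T -> Prop) (a : S) : Prop :=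
  exists2 f, I f & supported_in (- d%:Z) 0 f /\ f@_0 = a.

Lemma lead_coefs_mono d d' (I J : T -> Prop) a :
  (d <= d')%N -> (forall f, I f -> J f) -> lead_coefs d I a -> lead_coefs d' J a.
Proof.
move=> le_dd' IJ [f If [f_supp f0]]; exists f; first exact: IJ.
by split=> //; apply: supported_in_widen f_supp; lia.
Qed.

Lemma additive_subgroup_lead_coefs d (I : L -> Prop) :
  additive_subgroup I -> additive_subgroup (lead_coefs d I).
Proof.
move=> [I0 ID IN]; split.
- by exists 0 => //; split=> [m _|]; rewrite mcoeff0.
- move=> _ _ [f If [f_supp <-]] [g Ig [g_supp <-]]; exists (f + g); first exact: ID.
  by split=> [m Hm|]; rewrite mcoeffD // f_supp ?g_supp ?addr0.
- move=> _ [f If [f_supp <-]]; exists (- f); first exact: IN.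
  by split=> [m Hm|]; rewrite mcoeffN // f_supp ?oppr0.
Qed.

Section Shift.
Variable shift : int -> L -> L.
Hypothesis shift_coef0 : forall k g m, g@_(m - k) = 0 -> (shift k g)@_m = 0.
Hypothesis shiftK : forall k, cancel (shift k) (shift (- k)).

Lemma supported_in_shift k lo hi g :
  supported_in lo hi g -> supported_in (lo + k) (hi + k) (shift k g).
Proof. by move=> g_supp m Hm; apply/shift_coef0/g_supp; lia. Qed.

Definition shift_closed (I : L -> Prop) : Prop := forall k g, I g -> I (shift k g).

Lemma lead_coefs_eq (I J : L -> Prop) :
  additive_subgroup I -> shift_closed I -> additive_subgroup J -> shift_closed J ->
  (forall f, I f -> J f) -> (forall d a, lead_coefs d J a -> lead_coefs d I a) ->
  forall g, J g -> I g.
Proof.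
move=> [I0 ID IN] I_shift [J0 JD JN] J_shift IJ JI.
have below d h : J h -> supported_in (- d%:Z) (-1) h -> I h.
  elim: d h => [|d IHd] h Jh h_supp; first by rewrite (supported_in_empty _ h_supp).
  have h1_supp : supported_in (- d%:Z) 0 (shift 1 h).
    by apply: supported_in_widen (supported_in_shift (k := 1) h_supp); lia.
  have [f If [f_supp f0]] : lead_coefs d I (shift 1 h)@_0.
    by apply: JI; exists (shift 1 h); first exact: J_shift.
  rewrite -(shiftK 1 h) -(subrK f (shift 1 h)); apply/I_shift/ID => //.
  apply: IHd (supported_in_sub_lead f_supp h1_supp f0).
  by apply/JD/JN/IJ => //; apply: J_shift.
move=> g Jg; have [B g_supp] := laurent_bounded_support g.
rewrite -(shiftK (- B.+1%:Z) g) opprK; apply: I_shift.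
apply: (below (B + B).+1); first exact: J_shift.
by apply: supported_in_widen (supported_in_shift (k := - B.+1%:Z) g_supp); lia.
Qed.

Lemma acc_laurent (idS : (S -> Prop) -> Prop) (idL : (L -> Prop) -> Prop) :
  (forall I, idL I -> additive_subgroup I /\ shift_closed I) ->
  (forall d I, idL I -> idS (lead_coefs d I)) ->
  acc idS -> acc idL.
Proof.
move=> idL_sub idL_lead.
apply: (acc_transfer (L := lead_coefs)) => // [d d' I J a|I J].
  exact: lead_coefs_mono.
move=> /idL_sub[I_sub I_shift] /idL_sub[J_sub J_shift].
exact: lead_coefs_eq.
Qed.

End Shift.

Hypothesis S_ua : unital_absorbing S.
Hypothesis tau_nb : normalized_bijection tau.

Lemma zpow_tau0 k : zpow tau k 0 = 0.
Proof. by case: tau_nb => tau0 tau_bij _; apply: zpow_fixed. Qed.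

Lemma zpow_tau1 k : zpow tau k (naone S) = naone S.
Proof. by case: tau_nb => _ tau_bij tau1; apply: zpow_fixed. Qed.

Lemma mcoeff_laurent_mulUl k (a : S) (g : T) m :
  (laurent_mul tau << a *g k >> g)@_m = namul a (zpow tau k g@_(m - k)).
Proof.
have [_ _ mulr0 mul0r] := S_ua.
rewrite /laurent_mul msuppU; have [->|_] := eqVneq a 0.
  by rewrite big_seq_fset0 mcoeff0 mul0r.
rewrite big_seq_fset1 mcoeffUU.
under eq_bigr => j _ do rewrite addrC.
by rewrite mcoeff_sum_msupp // => /mcoeff_outdom ->; rewrite zpow_tau0 mulr0.
Qed.

Lemma mcoeff_laurent_mulUr k (a : S) (g : T) m :
  (laurent_mul tau g << a *g k >>)@_m = namul g@_(m - k) (zpow tau (m - k) a).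
Proof.
have [_ _ mulr0 mul0r] := S_ua.
rewrite /laurent_mul msuppU; have [->|_] := eqVneq a 0.
  rewrite big1 ?mcoeff0 ?zpow_tau0 ?mulr0 // => i _.
  by rewrite big_seq_fset0.
under eq_bigr => i _ do rewrite big_seq_fset1 mcoeffUU.
by rewrite mcoeff_sum_msupp // => /mcoeff_outdom ->; rewrite mul0r.
Qed.

Lemma laurent_unital_absorbing : unital_absorbing L.
Proof.
have [mul1r mulr1 mulr0 mul0r] := S_ua.
split=> x /=; apply/malgP => m.
- by rewrite mcoeff_laurent_mulUl subr0 mul1r.
- by rewrite mcoeff_laurent_mulUr subr0 zpow_tau1 mulr1.
- by rewrite mcoeff0 -(monalgU0 0) mcoeff_laurent_mulUr zpow_tau0 mulr0.
- by rewrite mcoeff0 -(monalgU0 0) mcoeff_laurent_mulUl mul0r.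
Qed.

Lemma left_ideal_lead_coefs d (I : L -> Prop) :
  left_ideal I -> left_ideal (lead_coefs d I).
Proof.
have [_ _ mulr0 _] := S_ua; move=> [I_sub I_mul].
split=> [|r _ [f If [f_supp <-]]]; first exact: additive_subgroup_lead_coefs.
exists (laurent_mul tau << r *g 0 >> f); first exact: I_mul.
split=> [m Hm|]; rewrite mcoeff_laurent_mulUl subr0 //.
by rewrite f_supp // zpow_tau0 mulr0.
Qed.

Lemma right_ideal_lead_coefs d (I : L -> Prop) :
  right_ideal I -> right_ideal (lead_coefs d I).
Proof.
have [_ _ _ mul0r] := S_ua; move=> [I_sub I_mul].
split=> [|r _ [f If [f_supp <-]]]; first exact: additive_subgroup_lead_coefs.
exists (laurent_mul tau f << r *g 0 >>); first exact: I_mul.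
by split=> [m Hm|]; rewrite mcoeff_laurent_mulUr subr0 // f_supp // mul0r.
Qed.

Lemma laurent_left_noetherian : left_noetherian S -> left_noetherian L.
Proof.
have [mul1r _ mulr0 _] := S_ua; have [_ tau_bij _] := tau_nb.
apply: (acc_laurent (shift := fun k g => laurent_mul tau << naone S *g k >> g)).
- by move=> k g m g0; rewrite mcoeff_laurent_mulUl g0 zpow_tau0 mulr0.
- move=> k g; apply/malgP => m.
  rewrite !mcoeff_laurent_mulUl !mul1r zpowK //.
  by congr (g@_ _); lia.
- by move=> I [I_sub I_mul]; split=> // k g; apply: I_mul.
- by move=> d I /left_ideal_lead_coefs.
Qed.

Lemma laurent_right_noetherian : right_noetherian S -> right_noetherian L.
Proof.
have [_ mulr1 _ mul0r] := S_ua.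
apply: (acc_laurent (shift := fun k g => laurent_mul tau g << naone S *g k >>)).
- by move=> k g m g0; rewrite mcoeff_laurent_mulUr g0 mul0r.
- move=> k g; apply/malgP => m.
  rewrite !mcoeff_laurent_mulUr !zpow_tau1 !mulr1.
  by congr (g@_ _); lia.
- by move=> I [I_sub I_mul]; split=> // k g; apply: I_mul.
- by move=> d I /right_ideal_lead_coefs.
Qed.

End SkewLaurent.

Lemma tower_noetherian (R S : naring) (lift : (R -> R) -> S -> S) (s : seq (R -> R)) :
  unital_absorbing S -> (forall h, List.In h s -> normalized_bijection (lift h)) ->
  (left_noetherian S -> left_noetherian (tower lift s)) /\
  (right_noetherian S -> right_noetherian (tower lift s)).
Proof.
elim: s S lift => [|h s IHs] S lift S_ua lift_nb //=.
have h_nb := lift_nb h (or_introl erefl).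
have [IHl IHr] := IHs (laurent (lift h)) (fun h' => coefmap (lift h'))
  (laurent_unital_absorbing S_ua h_nb)
  (fun h' h'_in => coefmap_normalized_bijection (lift h) (lift_nb h' (or_intror h'_in))).
split=> noeth; first exact/IHl/laurent_left_noetherian.
exact/IHr/laurent_right_noetherian.
Qed.

Theorem corollary11 (R : naring) (n : nat) (sigma : 'I_n -> R -> R) :
  is_naring R ->
  (forall i (x y : R), sigma i (x + y)%R = (sigma i x + sigma i y)%R) ->
  (forall i, bijective (sigma i)) ->
  (forall i, sigma i (naone R) = naone R) ->
  (forall i j (x : R), sigma i (sigma j x) = sigma j (sigma i x)) ->
  (left_noetherian R -> left_noetherian (iterated_laurent sigma)) /\
  (right_noetherian R -> right_noetherian (iterated_laurent sigma)).
Proof.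
move=> R_ring sigmaD sigma_bij sigma1 _.
apply: tower_noetherian; first exact: unital_absorbing_naring.
move=> _ /List.in_map_iff[i [<- _]].
exact: normalized_bijection_additive.
Qed.
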